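(* For every $\mathrm{CCS}^-$ process $P$ and every $P'$ with $!P\Rightarrow P'$, we have $!P\approx P'$.
   Context: $\mathrm{CCS}^-$ (CCScore without restriction) processes are given by the grammar $P,Q ::= 0 \mid a.P \mid \overline{a}.P \mid P\,|\,Q \mid\ !P$, where $a$ ranges over an infinite set of names. Actions are inputs $a$, outputs $\overline{a}$ (visible actions) and $\tau$. Transitions: $a.P \xrightarrow{a} P$; $\overline{a}.P \xrightarrow{\overline{a}} P$; if $P\xrightarrow{\gamma}P'$ then $P|Q\xrightarrow{\gamma}P'|Q$ and $Q|P\xrightarrow{\gamma}Q|P'$; if $P\xrightarrow{\overline a}P'$ and $Q\xrightarrow{a}Q'$ then $P|Q\xrightarrow{\tau}P'|Q'$ and $Q|P\xrightarrow{\tau}Q'|P'$; if $P\xrightarrow{\gamma}P'$ then $!P\xrightarrow{\gamma}P'\,|\,!P$; if $P\xrightarrow{a}P'$ and $P\xrightarrow{\overline a}P''$ then $!P\xrightarrow{\tau}P'|P''|\,!P$. $\Rightarrow$ is the reflexive transitive closure of $\xrightarrow{\tau}$; $\stackrel{\hat\alpha}{\Rightarrow}$ is $\Rightarrow$ if $\alpha=\tau$ and $\Rightarrow\xrightarrow{\alpha}\Rightarrow$ otherwise. A process is divergent if it has an infinite sequence of $\tau$-transitions; a relation $\mathcal R$ is divergence-sensitive if $P\,\mathcal R\,Q$ implies ($P$ divergent iff $Q$ divergent). Weak bisimilarity $\approx$ is the union of all symmetric divergence-sensitive relations $\mathcal R$ such that $P\,\mathcal R\,Q$ and $P\xrightarrow{\alpha}P'$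 imply $Q\stackrel{\hat\alpha}{\Rightarrow}Q'$ for some $Q'$ with $P'\,\mathcal R\,Q'$. *)

From Stdlib Require Import Relations.

Definition name := nat.

Inductive proc : Type :=
| Nil : proc
| In : name -> proc -> proc
| Out : name -> proc -> proc
| Par : proc -> proc -> proc
| Bang : proc -> proc.

Inductive act : Type :=
| AIn : name -> act
| AOut : name -> act
| Tau : act.

Inductive step : proc -> act -> proc -> Prop :=
| s_in : forall a P, step (In a P) (AIn a) P
| s_out : forall a P, step (Out a P) (AOut a) P
| s_parL : forall P Q P' g, step P g P' -> step (Par P Q) g (Par P' Q)
| s_parR : forall P Q P' g, step P g P' -> step (Par Q P) g (Par Q P')
| s_comL : forall P Q P' Q' a,
    step P (AOut a) P' -> step Q (AIn a) Q' -> step (Par P Q) Tau (Par P' Q')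
| s_comR : forall P Q P' Q' a,
    step P (AOut a) P' -> step Q (AIn a) Q' -> step (Par Q P) Tau (Par Q' P')
| s_rep : forall P P' g, step P g P' -> step (Bang P) g (Par P' (Bang P))
| s_repcom : forall P P' P'' a,
    step P (AIn a) P' -> step P (AOut a) P'' ->
    step (Bang P) Tau (Par (Par P' P'') (Bang P)).

Definition tau_step (P Q : proc) : Prop := step P Tau Q.
Definition wtau : proc -> proc -> Prop := clos_refl_trans proc tau_step.

Definition wstep_hat (P : proc) (al : act) (Q : proc) : Prop :=
  match al with
  | Tau => wtau P Q
  | _ => exists P1 P2, wtau P P1 /\ step P1 al P2 /\ wtau P2 Q
  end.

Definition divergent (P : proc) : Prop :=
  exists f : nat -> proc, f 0 = P /\ forall n, step (f n) Tau (f (S n)).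

Definition symmetric_rel (R : proc -> proc -> Prop) : Prop :=
  forall P Q, R P Q -> R Q P.

Definition div_sensitive (R : proc -> proc -> Prop) : Prop :=
  forall P Q, R P Q -> (divergent P <-> divergent Q).

Definition weak_sim (R : proc -> proc -> Prop) : Prop :=
  forall P Q, R P Q -> forall al P', step P al P' ->
    exists Q', wstep_hat Q al Q' /\ R P' Q'.

Definition wbisim (P Q : proc) : Prop :=
  exists R : proc -> proc -> Prop,
    symmetric_rel R /\ div_sensitive R /\ weak_sim R /\ R P Q.

From Stdlib Require Import Relations Setoid Morphisms IndefiniteDescription.

(* Structural congruence (commutative monoid laws for [Par]) is a strong
   bisimulation, and every derivative of [W | !P] is congruent to some
   [W' | !P].  Call [Y] a residue of [!P] when [!P ==> C] for some
   [C ≡ Y | !P].  The pairs [W | (Y1 | !P)], [W | (Y2 | !P)] with residues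
   [Y1], [Y2] form a weak bisimulation: the right-hand side first unfolds
   the residue [Y1] from its own copy of [!P] by tau-steps, reaching
   [Y2 | A] up to congruence, and then answers every move of [A] strongly
   while [Y2] stays idle.  The same catch-up transfers divergence. *)

Inductive struct_cong : proc -> proc -> Prop :=
| c_refl A : struct_cong A A
| c_sym A B : struct_cong A B -> struct_cong B A
| c_trans A B C : struct_cong A B -> struct_cong B C -> struct_cong A C
| c_comm A B : struct_cong (Par A B) (Par B A)
| c_assoc A B C : struct_cong (Par (Par A B) C) (Par A (Par B C))
| c_nil A : struct_cong (Par Nil A) A
| c_par A A' B : struct_cong A A' -> struct_cong (Par A B) (Par A' B).

Infix "≡" := struct_cong (at level 70).

#[export] Instance struct_cong_equiv : Equivalence struct_cong.
Proof. split; [exact c_refl | exact c_sym | exact c_trans]. Qed.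

#[export] Instance Par_struct_cong : Proper (struct_cong ==> struct_cong ==> struct_cong) Par.
Proof.
  intros A A' HA B B' HB.
  rewrite (c_par _ _ B HA), (c_comm A' B), (c_par _ _ A' HB). apply c_comm.
Qed.

Lemma par_left_comm A B C : Par A (Par B C) ≡ Par B (Par A C).
Proof. rewrite <- !c_assoc, (c_comm A B). reflexivity. Qed.

Definition matches_steps (A B : proc) : Prop :=
  forall al A', step A al A' -> exists B', step B al B' /\ A' ≡ B'.

Lemma matches_steps_trans A B C :
  matches_steps A B -> matches_steps B C -> matches_steps A C.
Proof.
  intros HAB HBC al A' HA.
  destruct (HAB _ _ HA) as [B' [HB cB]]. destruct (HBC _ _ HB) as [C' [HC cC]].
  exists C'. split; [exact HC | now rewrite cB].
Qed.

Lemma matches_steps_comm A B : matches_steps (Par A B) (Par B A).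
Proof.
  intros al X H; inversion H; subst; eexists; split;
    try apply c_comm; eauto using step.
Qed.

Lemma matches_steps_assoc A B C :
  matches_steps (Par (Par A B) C) (Par A (Par B C)).
Proof.
  intros al X H; inversion H; subst;
    try match goal with H0 : step (Par A B) _ _ |- _ => inversion H0; subst end;
    eexists; split; try apply c_assoc; eauto using step.
Qed.

Lemma matches_steps_assoc_r A B C :
  matches_steps (Par A (Par B C)) (Par (Par A B) C).
Proof.
  eauto 9 using matches_steps_trans, matches_steps_comm, matches_steps_assoc.
Qed.

Lemma matches_steps_parL A A' B :
  A ≡ A' -> matches_steps A A' -> matches_steps (Par A B) (Par A' B).
Proof.
  intros cA HA al X HX; inversion HX; subst;
    try match goal with H0 : step A _ _ |- _ => destruct (HA _ _ H0) as (Y & HY & cY) end;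
    eexists; split; eauto using step, c_par, c_refl.
Qed.

Lemma struct_cong_matches_steps A B :
  A ≡ B -> matches_steps A B /\ matches_steps B A.
Proof.
  induction 1 as [A|A B _ IH|A B C _ IH1 _ IH2|A B|A B C|A|A A' B cA IH].
  - split; intros al X HX; exists X; split; auto using c_refl.
  - tauto.
  - destruct IH1, IH2; split; eauto using matches_steps_trans.
  - split; apply matches_steps_comm.
  - split; [apply matches_steps_assoc | apply matches_steps_assoc_r].
  - split; intros al X HX.
    + inversion HX; subst;
        try match goal with H0 : step Nil _ _ |- _ => inversion H0 end.
      eexists; split; [eassumption | apply c_nil].
    + exists (Par Nil X). split; [now apply s_parR | symmetry; apply c_nil].
  - destruct IH; split; apply matches_steps_parL; auto using c_sym.
Qed.

Lemma struct_cong_step A B al A' :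
  A ≡ B -> step A al A' -> exists B', step B al B' /\ A' ≡ B'.
Proof. intro c. apply (proj1 (struct_cong_matches_steps _ _ c)). Qed.

Lemma struct_cong_wtau A B A' :
  A ≡ B -> wtau A A' -> exists B', wtau B B' /\ A' ≡ B'.
Proof.
  intros c H; revert B c; induction H as [A A' H|A|A A1 A' _ IH1 _ IH2]; intros B c.
  - destruct (struct_cong_step _ _ _ _ c H) as [B' [HB cB]].
    exists B'. split; [now apply rt_step | exact cB].
  - exists B. split; [apply rt_refl | exact c].
  - destruct (IH1 _ c) as [B1 [H1 c1]]. destruct (IH2 _ c1) as [B' [H2 c2]].
    exists B'. split; [eapply rt_trans; eassumption | exact c2].
Qed.

Lemma wtau_parR W A B : wtau A B -> wtau (Par W A) (Par W B).
Proof.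
  induction 1; [apply rt_step; now apply s_parR | apply rt_refl | eapply rt_trans; eauto].
Qed.

Lemma wstep_hat_of_wtau_step A A1 al A2 :
  wtau A A1 -> step A1 al A2 -> wstep_hat A al A2.
Proof.
  intros H1 H2. destruct al; simpl.
  1,2: exists A1, A2; split; [exact H1 | split; [exact H2 | apply rt_refl]].
  eapply rt_trans; [exact H1 | now apply rt_step].
Qed.

(* Building the infinite tau-sequence picks one successor at each step,
   hence the use of [constructive_indefinite_description]. *)
Lemma divergent_of_tau_progressive (S : proc -> Prop) :
  (forall x, S x -> exists y, step x Tau y /\ S y) -> forall x, S x -> divergent x.
Proof.
  intros HS x Sx.
  assert (next : forall s : {x | S x},
            {y : {x | S x} | step (proj1_sig s) Tau (proj1_sig y)}).
  { intros [z Sz]. destruct (constructive_indefinite_description _ (HS z Sz)) as [y [Hy Sy]].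
    exists (exist _ y Sy). exact Hy. }
  set (F := fix F n : {x | S x} :=
        match n with 0 => exist _ x Sx | S m => proj1_sig (next (F m)) end).
  exists (fun n => proj1_sig (F n)). split; [reflexivity|].
  intro n. exact (proj2_sig (next (F n))).
Qed.

Lemma divergent_tau_step x : divergent x -> exists y, step x Tau y /\ divergent y.
Proof.
  intros [f [f0 Hf]]. exists (f 1). split.
  - rewrite <- f0. apply Hf.
  - exists (fun n => f (S n)). split; auto.
Qed.

Lemma divergent_struct_cong x y : x ≡ y -> divergent x -> divergent y.
Proof.
  intros c d. apply (divergent_of_tau_progressive (fun y => exists x, x ≡ y /\ divergent x)); eauto.
  intros z [w [cw dw]]. destruct (divergent_tau_step _ dw) as [w' [Hw dw']].
  destruct (struct_cong_step _ _ _ _ cw Hw) as [z' [Hz cz]]. eauto.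
Qed.

Lemma divergent_parR Y x : divergent x -> divergent (Par Y x).
Proof.
  intros [f [f0 Hf]]. exists (fun n => Par Y (f n)). split.
  - now rewrite f0.
  - intro n. apply s_parR, Hf.
Qed.

Lemma divergent_wtau x y : wtau x y -> divergent y -> divergent x.
Proof.
  intro H. apply clos_rt_rt1n in H.
  induction H as [|x x1 y Hx _ IH]; intro d; [exact d|].
  destruct (IH d) as [f [f0 Hf]].
  exists (fun n => match n with 0 => x | S m => f m end). split; [reflexivity|].
  intros [|n]; [now rewrite f0 | apply Hf].
Qed.

Lemma step_Bang_inv P al M : step (Bang P) al M -> exists Z, M = Par Z (Bang P).
Proof. intro H; inversion H; subst; eauto. Qed.

Lemma step_par_Bang W P al A' :
  step (Par W (Bang P)) al A' -> exists W', A' ≡ Par W' (Bang P).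
Proof.
  intro H; inversion H; subst;
    try match goal with Hb : step (Bang P) _ _ |- _ =>
          destruct (step_Bang_inv _ _ _ Hb) as [Z ->] end;
    eexists; [reflexivity | symmetry; apply c_assoc ..].
Qed.

Lemma struct_cong_step_par_Bang A W P al A' :
  A ≡ Par W (Bang P) -> step A al A' -> exists W', A' ≡ Par W' (Bang P).
Proof.
  intros c H. destruct (struct_cong_step _ _ _ _ c H) as [B' [HB cB]].
  destruct (step_par_Bang _ _ _ _ HB) as [W' cW']. exists W'. now rewrite cB.
Qed.

Lemma wtau_Bang_inv P P' : wtau (Bang P) P' -> exists Y, P' ≡ Par Y (Bang P).
Proof.
  intro H. apply clos_rt_rtn1 in H.
  induction H as [|A A' HA _ [Y cY]].
  - exists Nil. symmetry. apply c_nil.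
  - eapply struct_cong_step_par_Bang; eassumption.
Qed.

Definition bang_residue (P Y : proc) : Prop :=
  exists C, wtau (Bang P) C /\ C ≡ Par Y (Bang P).

Lemma bang_residue_nil P : bang_residue P Nil.
Proof. exists (Bang P). split; [apply rt_refl | symmetry; apply c_nil]. Qed.

Definition residue_rel (A B : proc) : Prop :=
  exists P W Y1 Y2, bang_residue P Y1 /\ bang_residue P Y2 /\
    A ≡ Par W (Par Y1 (Bang P)) /\ B ≡ Par W (Par Y2 (Bang P)).

Lemma residue_rel_sym : symmetric_rel residue_rel.
Proof. intros A B (P & W & Y1 & Y2 & r1 & r2 & cA & cB). exists P, W, Y2, Y1; auto. Qed.

Lemma residue_catch_up P W Y1 Y2 B :
  bang_residue P Y1 -> B ≡ Par W (Par Y2 (Bang P)) ->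
  exists B1, wtau B B1 /\ B1 ≡ Par Y2 (Par W (Par Y1 (Bang P))).
Proof.
  intros [C [HC cC]] cB.
  destruct (struct_cong_wtau _ _ _ (c_sym _ _ cB) (wtau_parR W _ _ (wtau_parR Y2 _ _ HC)))
    as [B1 [HB1 c1]].
  exists B1. split; [exact HB1|].
  rewrite <- c1, cC, (par_left_comm W Y2). reflexivity.
Qed.

Lemma residue_rel_divergent A B : residue_rel A B -> divergent A -> divergent B.
Proof.
  intros (P & W & Y1 & Y2 & r1 & r2 & cA & cB) d.
  destruct (residue_catch_up _ _ _ _ _ r1 cB) as [B1 [HB1 c1]].
  apply (divergent_wtau _ _ HB1), (divergent_struct_cong (Par Y2 A)).
  - now rewrite c1, cA.
  - now apply divergent_parR.
Qed.

Lemma residue_rel_weak_sim : weak_sim residue_rel.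
Proof.
  intros A B (P & W & Y1 & Y2 & r1 & r2 & cA & cB) al A' HA.
  destruct (residue_catch_up _ _ _ _ _ r1 cB) as [B1 [HB1 c1]].
  assert (cB1 : Par Y2 A ≡ B1) by now rewrite c1, cA.
  destruct (struct_cong_step _ _ _ _ cB1 (s_parR _ _ _ _ HA)) as [B2 [HB2 c2]].
  assert (cA_assoc : A ≡ Par (Par W Y1) (Bang P)) by now rewrite cA, c_assoc.
  destruct (struct_cong_step_par_Bang _ _ _ _ _ cA_assoc HA) as [W' cW'].
  exists B2. split; [eapply wstep_hat_of_wtau_step; eassumption|].
  exists P, W', Nil, Y2. repeat split; auto using bang_residue_nil.
  - now rewrite c_nil.
  - rewrite <- c2, cW'. apply par_left_comm.
Qed.

Theorem mainTheorem11 : forall P P' : proc,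
  wtau (Bang P) P' -> wbisim (Bang P) P'.
Proof.
  intros P P' H. destruct (wtau_Bang_inv _ _ H) as [Y cY].
  exists residue_rel. split; [|split; [|split]].
  - exact residue_rel_sym.
  - intros A B HAB. split; apply residue_rel_divergent; auto using residue_rel_sym.
  - exact residue_rel_weak_sim.
  - exists P, Nil, Nil, Y. repeat split.
    + apply bang_residue_nil.
    + exists P'. split; assumption.
    + now rewrite !c_nil.
    + now rewrite c_nil.
Qed.
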